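(* Let $G,H$ be graphs with $H$ connected, let $b$ be a positive integer, and let $G^*$ be the $(H,b)$-core of $G$. If, in the $(1:b)$ Maker-Breaker vertex $H$-game (resp. the $(1:b)$ Client-Waiter vertex $H$-game), Breaker (resp. Waiter) has a winning strategy when the game is played on $G^*$, then Breaker (resp. Waiter) has a winning strategy when the game is played on $G$ (with the same player moving first).
   Context: Fix a graph $G$, a connected graph $H$ and a positive integer $b$. With respect to $G,H,b$: a bad vertex is a vertex of $G$ lying in no copy of $H$ in $G$; a bad edge is an edge of $G$ lying in no copy of $H$ in $G$; a bad set is a set $U\subseteq V(G)$ with $2\le|U|\le b+1$ such that no copy $\hat H$ of $H$ in $G$ satisfies $|V(\hat H)\cap U|=1$; a small component is a connected component of $G$ with at most $(b+1)(v(H)-1)$ vertices. A graph is $(H,b)$-stable if it contains no bad vertex, bad edge, bad set or small component (with respect to itself, $H$ and $b$). The $(H,b)$-core of $G$ is the union of all $(H,b)$-stable subgraphs of $G$. The $(1:b)$ Maker-Breaker vertex $H$-game on a graph: Maker claims one and Breaker $b$ previously unclaimed vertices per turn, alternately, until all are claimed; Maker wins iff the subgraph induced by his vertices contains a copy of $H$. The $(1:b)$ Client-Waiter vertex $H$-game: in each round Waiter offers $t$ free vertices with $1\le t\le b+1$, Client claims one and Waiter the rest; Client wins iff the subgraph induced by his vertices contains a copy of $H$, otherwise Waiter wins. *)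

From HB Require Import structures.
From mathcomp Require Import all_boot.
Set Implicit Arguments. Unset Strict Implicit. Unset Printing Implicit Defensive.

(* A finite graph on ground type T: a vertex set and a set of edges, each edge
   being a 2-element subset of the vertex set (see wf_graph). *)
Notation vgraph T := ({set T} * {set {set T}})%type.

Definition wf_graph (T : finType) (g : vgraph T) : bool :=
  [forall e in g.2, (#|e| == 2) && (e \subset g.1)].

Definition subgraph (T : finType) (g' g : vgraph T) : bool :=
  (g'.1 \subset g.1) && (g'.2 \subset g.2).

Definition is_copy (U T : finType) (eH : rel U) (g : vgraph T)
    (f : {ffun U -> T}) : bool :=
  [&& injectiveb f, [forall u, f u \in g.1]
    & [forall u, forall v, eH u v ==> ([set f u; f v] \in g.2)]].

Definition copy_vertices (U T : finType) (f : {ffun U -> T}) : {set T} :=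
  [set f u | u : U].

Definition has_copy (U T : finType) (eH : rel U) (g : vgraph T) : bool :=
  [exists f : {ffun U -> T}, is_copy eH g f].

Definition bad_vertex (U T : finType) (eH : rel U) (g : vgraph T) (x : T) :=
  (x \in g.1) &&
  ~~ [exists f : {ffun U -> T}, is_copy eH g f && (x \in copy_vertices f)].

Definition bad_edge (U T : finType) (eH : rel U) (g : vgraph T) (e : {set T}) :=
  (e \in g.2) &&
  ~~ [exists f : {ffun U -> T}, is_copy eH g f &&
        [exists u, exists v, eH u v && (e == [set f u; f v])]].

Definition bad_set (U T : finType) (eH : rel U) (b : nat) (g : vgraph T)
    (A : {set T}) :=
  [&& A \subset g.1, 2 <= #|A|, #|A| <= b.+1
    & ~~ [exists f : {ffun U -> T},
            is_copy eH g f && (#|copy_vertices f :&: A| == 1)]].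

Definition gadj (T : finType) (g : vgraph T) : rel T :=
  fun x y => [&& x \in g.1, y \in g.1 & [set x; y] \in g.2].

Definition component (T : finType) (g : vgraph T) (x : T) : {set T} :=
  [set y in g.1 | connect (gadj g) x y].

Definition in_small_component (U T : finType) (b : nat) (g : vgraph T) (x : T) :=
  (x \in g.1) && (#|component g x| <= b.+1 * (#|U| - 1)).

Definition stable (U T : finType) (eH : rel U) (b : nat) (g : vgraph T) : bool :=
  [&& wf_graph g,
      [forall x, ~~ bad_vertex eH g x],
      [forall e, ~~ bad_edge eH g e],
      [forall A, ~~ bad_set eH b g A]
    & [forall x, ~~ in_small_component U b g x]].

Definition core (U T : finType) (eH : rel U) (b : nat) (G : vgraph T) : vgraph T :=
  (\bigcup_(g : vgraph T | subgraph g G && stable eH b g) g.1,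
   \bigcup_(g : vgraph T | subgraph g G && stable eH b g) g.2).

Definition induced (T : finType) (g : vgraph T) (M : {set T}) : vgraph T :=
  (M :&: g.1, [set e in g.2 | e \subset M]).

Definition maker_wins (U T : finType) (eH : rel U) (g : vgraph T) (M : {set T}) :=
  has_copy eH (induced g M).

Definition free (T : finType) (g : vgraph T) (M B : {set T}) : {set T} :=
  g.1 :\: (M :|: B).

(* (1:b) Maker-Breaker vertex H-game on g; position = (Maker's set, Breaker's
   set). mb_bwin_maker_turn M B : Breaker has a winning strategy from this
   position with Maker to move; similarly for Breaker to move. When fewer than
   b vertices are free, Breaker claims all of them. *)
Inductive mb_bwin_maker_turn (U T : finType) (eH : rel U) (b : nat) (g : vgraph T)
  : {set T} -> {set T} -> Prop :=
| mbM_end (M B : {set T}) : free g M B = set0 -> ~~ maker_wins eH g M ->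
    mb_bwin_maker_turn eH b g M B
| mbM_move (M B : {set T}) : free g M B != set0 ->
    (forall x, x \in free g M B -> mb_bwin_breaker_turn eH b g (x |: M) B) ->
    mb_bwin_maker_turn eH b g M B
with mb_bwin_breaker_turn (U T : finType) (eH : rel U) (b : nat) (g : vgraph T)
  : {set T} -> {set T} -> Prop :=
| mbB_end (M B : {set T}) : free g M B = set0 -> ~~ maker_wins eH g M ->
    mb_bwin_breaker_turn eH b g M B
| mbB_move (M B C : {set T}) : free g M B != set0 -> C \subset free g M B ->
    #|C| = minn b #|free g M B| ->
    mb_bwin_maker_turn eH b g M (C :|: B) ->
    mb_bwin_breaker_turn eH b g M B.

(* (1:b) Client-Waiter vertex H-game on g; position = (Client's set, Waiter's
   set). cw_wwin C W : Waiter has a winning strategy from this position. *)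
Inductive cw_wwin (U T : finType) (eH : rel U) (b : nat) (g : vgraph T)
  : {set T} -> {set T} -> Prop :=
| cw_end (C W : {set T}) : free g C W = set0 -> ~~ maker_wins eH g C -> cw_wwin eH b g C W
| cw_move (C W O : {set T}) : O \subset free g C W -> 0 < #|O| <= b.+1 ->
    (forall x, x \in O -> cw_wwin eH b g (x |: C) (W :|: (O :\ x))) ->
    cw_wwin eH b g C W.

From HB Require Import structures.
From mathcomp Require Import all_boot zify.
Set Implicit Arguments. Unset Strict Implicit. Unset Printing Implicit Defensive.

(* Peeling G down to its core repeatedly deletes a bad vertex, a bad edge, a bad
   set or a small component, and every stable subgraph survives each deletion;
   so it suffices to transfer a Breaker (Waiter) win from g minus such a piece X
   back to g.  Breaker follows his strategy on the rest and answers every Maker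
   vertex in X by b vertices of X (Waiter offers X in blocks of b+1), so Maker
   (Client) ends with at most ceil(|X| / (b+1)) vertices of X: at most one of a
   bad set and fewer than v(H) of a small component.  Then every copy of H among
   Maker's vertices avoids X (it meets a bad set in zero or at least two
   vertices, and a copy meeting a small component lies inside it because H is
   connected) and uses no bad edge, so it is already a copy in the smaller
   graph. *)

Section SetCounting.
Variable T : finType.
Implicit Types A D F : {set T}.

Lemma exists_subset_card A n : n <= #|A| -> exists2 D : {set T}, D \subset A & #|D| = n.
Proof.
case/card_geqP=> s [uniq_s size_s sA]; exists [set x in s].
  by apply/subsetP=> x; rewrite inE => /sA.
by rewrite cardsE (card_uniqP uniq_s).
Qed.

Lemma exists_subset_card_between D F n :
  D \subset F -> #|D| <= n -> n <= #|F| ->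
  exists C : {set T}, [/\ D \subset C, C \subset F & #|C| = n].
Proof.
move=> sDF leDn lenF.
have : n - #|D| <= #|F :\: D| by rewrite cardsDS //; lia.
case/exists_subset_card=> A sA cardA; exists (D :|: A); split.
- exact: subsetUl.
- by rewrite subUset sDF (subset_trans sA (subsetDl _ _)).
have disjDA : [disjoint D & A].
  by apply: disjointWr sA _; apply/pred0P=> x; rewrite !inE; case: (x \in D).
by rewrite cardsU (disjoint_setI0 disjDA) cards0 cardA; lia.
Qed.

End SetCounting.

Section Copies.
Variables (U T : finType) (eH : rel U).
Implicit Types (g S : vgraph T) (M : {set T}) (f : {ffun U -> T}).

Lemma copy_vertices_sub g f : is_copy eH g f -> copy_vertices f \subset g.1.
Proof. by case/and3P=> _ /forallP f_in _; apply/subsetP=> _ /imsetP[u _ ->]. Qed.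

Lemma card_copy_vertices g f : is_copy eH g f -> #|copy_vertices f| = #|U|.
Proof. by case/and3P=> /injectiveP f_inj _ _; rewrite card_imset. Qed.

Lemma copy_subgraph S g f : subgraph S g -> is_copy eH S f -> is_copy eH g f.
Proof.
case/andP=> sV sE /and3P[f_inj /forallP f_in /forallP f_e]; apply/and3P; split=> //.
  by apply/forallP=> u; apply: (subsetP sV).
apply/forallP=> u; apply/forallP=> v; apply/implyP=> huv.
by apply: (subsetP sE); move/forallP/(_ v)/implyP: (f_e u); apply.
Qed.

Lemma copy_induced g M f :
  is_copy eH (induced g M) f -> is_copy eH g f /\ copy_vertices f \subset M.
Proof.
move=> f_copy; split.
  apply: copy_subgraph f_copy; apply/andP; split; first exact: subsetIr.
  by apply/subsetP=> e; rewrite inE => /andP[].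
by apply: subset_trans (copy_vertices_sub f_copy) (subsetIl _ _).
Qed.

Lemma copy_induced_sub g M f :
  is_copy eH g f -> copy_vertices f \subset M -> is_copy eH (induced g M) f.
Proof.
move=> /[dup] f_copy /and3P[f_inj /forallP f_in /forallP f_e] sfM.
have fM u : f u \in M by apply: (subsetP sfM); rewrite imset_f.
apply/and3P; split=> //.
  by apply/forallP=> u; rewrite inE fM f_in.
apply/forallP=> u; apply/forallP=> v; apply/implyP=> huv.
move/forallP/(_ v)/implyP: (f_e u) => /(_ huv) e_in.
by rewrite inE e_in subUset !sub1set !fM.
Qed.

Lemma maker_winsP g M :
  reflect (exists2 f, is_copy eH g f & copy_vertices f \subset M) (maker_wins eH g M).
Proof.
apply: (iffP existsP) => [[f /copy_induced[]]|[f f_copy sfM]]; first by exists f.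
by exists f; apply: copy_induced_sub.
Qed.

Lemma maker_winsS g M M' : M \subset M' -> maker_wins eH g M -> maker_wins eH g M'.
Proof.
move=> sMM' /maker_winsP[f f_copy sfM]; apply/maker_winsP.
by exists f; last exact: subset_trans sMM'.
Qed.

Lemma copy_connect g f u v :
  is_copy eH g f -> connect eH u v -> connect (gadj g) (f u) (f v).
Proof.
case/and3P=> _ /forallP f_in /forallP f_e /connectP[p p_path ->].
elim: p u p_path => [|w p IHp] u /=; first by rewrite connect0.
case/andP=> huw /IHp; apply: connect_trans; apply: connect1.
by rewrite /gadj !f_in /=; move/forallP/(_ w)/implyP: (f_e u); apply.
Qed.

End Copies.

Section GameFacts.
Variables (U T : finType) (eH : rel U) (b : nat) (g : vgraph T).
Implicit Types M B C : {set T}.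

Lemma free_card_lt M B M' B' x :
  M :|: B \subset M' :|: B' -> x \in free g M B -> x \in M' :|: B' ->
  #|free g M' B'| < #|free g M B|.
Proof.
move=> sMB x_free x_in; apply/proper_card/properP; split; first exact: setDS.
by exists x; rewrite // inE x_in.
Qed.

Lemma mb_bwin_maker_turn_inv M B :
  mb_bwin_maker_turn eH b g M B ->
  free g M B = set0 /\ ~~ maker_wins eH g M \/
  forall x, x \in free g M B -> mb_bwin_breaker_turn eH b g (x |: M) B.
Proof. by case=> *; [left | right]. Qed.

Lemma mb_bwin_breaker_turn_inv M B :
  mb_bwin_breaker_turn eH b g M B ->
  free g M B = set0 /\ ~~ maker_wins eH g M \/
  exists C, [/\ C \subset free g M B, #|C| = minn b #|free g M B|
               & mb_bwin_maker_turn eH b g M (C :|: B)].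
Proof. by case=> [? ? ? ?|? ? C ? ? ? ?]; [left | right; exists C]. Qed.

Scheme mb_bwin_maker_turn_mutind := Induction for mb_bwin_maker_turn Sort Prop
with mb_bwin_breaker_turn_mutind := Induction for mb_bwin_breaker_turn Sort Prop.

Lemma mb_bwin_maker_turn_lost M B :
  mb_bwin_maker_turn eH b g M B -> ~~ maker_wins eH g M.
Proof.
move=> win_B; apply: (@mb_bwin_maker_turn_mutind U T eH b g
  (fun M _ _ => ~~ maker_wins eH g M) (fun M _ _ => ~~ maker_wins eH g M)
  _ _ _ _ M B win_B) => //.
move=> M' B' /set0Pn[x x_free] _ IH.
by apply: contra (IH x x_free); apply: maker_winsS; exact: subsetUr.
Qed.

End GameFacts.

Section BreakerSimulation.
Variables (U T : finType) (eH : rel U) (b : nat) (g g' : vgraph T).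
Variable Inv : {set T} -> {set T} -> Prop.
Implicit Types M B D Bs : {set T}.

Hypothesis b_gt0 : 0 < b.
Hypothesis sub_verts : g'.1 \subset g.1.
Hypothesis InvS : forall M B B', B \subset B' -> Inv M B -> Inv M B'.
Hypothesis Inv_claim_in : forall M B x, x \in g'.1 -> Inv M B -> Inv (x |: M) B.
Hypothesis Inv_claim_out : forall M B x, Inv M B -> x \in free g M B -> x \notin g'.1 ->
  exists D, [/\ D \subset free g (x |: M) B, #|D| <= b & Inv (x |: M) (D :|: B)].
Hypothesis Inv_win : forall M B, Inv M B ->
  maker_wins eH g M -> maker_wins eH g' (M :&: g'.1).
Hypothesis Inv0 : Inv set0 set0.

(* Breaker, with Maker to move at (M, B) on g, holds the position (M :&: g'.1, Bs)
   of his winning strategy on g'; Bs \subset B because Breaker may have claimed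
   more vertices on g than his strategy on g' prescribes. *)
Definition simulates M B := forall Bs, Inv M B -> Bs \subset B ->
  mb_bwin_maker_turn eH b g' (M :&: g'.1) Bs -> mb_bwin_maker_turn eH b g M B.

Section Step.
Variable n : nat.
Hypothesis IHn : forall M B, #|free g M B| < n -> simulates M B.

Lemma simulates_forced_move M B D Bs :
  #|free g M B| <= n -> D \subset free g M B -> #|D| <= b -> Inv M (D :|: B) ->
  Bs \subset D :|: B -> mb_bwin_maker_turn eH b g' (M :&: g'.1) Bs ->
  mb_bwin_breaker_turn eH b g M B.
Proof.
move=> le_n sD leDb inv sBs win'.
have [free0|free_n0] := eqVneq (free g M B) set0.
  by apply: mbB_end free0 _; apply: contra (Inv_win inv) (mb_bwin_maker_turn_lost win').
have leDfree : #|D| <= minn b #|free g M B| by rewrite leq_min leDb subset_leq_card.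
have [C [sDC sC card_C]] := exists_subset_card_between sD leDfree (geq_minr _ _).
have [x x_C] : exists x, x \in C.
  by apply/card_gt0P; rewrite card_C leq_min b_gt0 card_gt0.
apply: (mbB_move free_n0 sC card_C).
apply: IHn (Bs) _ _ win'.
- apply: leq_trans le_n; apply: free_card_lt (subsetP sC x x_C) _.
    by rewrite setUCA subsetUr.
  by rewrite !inE x_C orbT.
- exact: InvS (setSU _ sDC) inv.
- exact: subset_trans sBs (setSU _ sDC).
Qed.

Lemma simulates_follow_move M B Bs :
  #|free g M B| <= n -> Inv M B -> Bs \subset B ->
  mb_bwin_breaker_turn eH b g' (M :&: g'.1) Bs -> mb_bwin_breaker_turn eH b g M B.
Proof.
move=> le_n inv sBs /mb_bwin_breaker_turn_inv[[free0 lost'] | [C [sC card_C win']]].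
  by apply: (simulates_forced_move (D := set0)) (Bs) le_n _ _ _ _ _;
    rewrite ?sub0set ?cards0 ?set0U //; exact: mbM_end.
apply: (simulates_forced_move (D := C :&: free g M B)) (C :|: Bs) le_n _ _ _ _ win'.
- exact: subsetIr.
- by apply: leq_trans (subset_leq_card (subsetIl _ _)) _; rewrite card_C geq_minl.
- exact: InvS (subsetUr _ _) inv.
apply/subsetP=> c; rewrite inE => /orP[c_C | /(subsetP sBs) c_B]; last first.
  by rewrite inE c_B orbT.
have := subsetP sC c c_C; rewrite !inE => /andP[/norP[c_M' _] c_V'].
rewrite c_C (subsetP sub_verts) //= andbT.
by move: c_M'; rewrite c_V' andbT => /negbTE ->; case: (c \in B).
Qed.

Lemma simulates_step M B : #|free g M B| <= n -> simulates M B.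
Proof.
move=> le_n Bs inv sBs win'.
have [free0|free_n0] := eqVneq (free g M B) set0.
  by apply: mbM_end free0 _; apply: contra (Inv_win inv) (mb_bwin_maker_turn_lost win').
apply: mbM_move free_n0 _ => x x_free.
have lt_x : #|free g (x |: M) B| < #|free g M B|.
  by apply: free_card_lt x_free _; rewrite ?setSU ?subsetUr // !inE eqxx.
have le_x : #|free g (x |: M) B| <= n by apply: leq_trans le_n; exact: ltnW.
have [x_M x_B] : x \notin M /\ x \notin B by move: x_free; rewrite !inE => /andP[/norP[]].
have [x_V' | x_V'] := boolP (x \in g'.1).
  apply: (simulates_follow_move le_x (Inv_claim_in x_V' inv) sBs).
  have -> : (x |: M) :&: g'.1 = x |: (M :&: g'.1) by rewrite setIUl (setIidPl _) // sub1set.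
  have x_free' : x \in free g' (M :&: g'.1) Bs.
    by rewrite !inE x_V' andbT andbT (negbTE x_M) (contraNF (subsetP sBs x)).
  case/mb_bwin_maker_turn_inv: win' => [[free0' _] | ]; last exact.
  by rewrite free0' inE in x_free'.
have [D [sD leDb inv']] := Inv_claim_out inv x_free x_V'.
apply: simulates_forced_move le_x sD leDb inv' _ _.
  exact: subset_trans sBs (subsetUr _ _).
by rewrite setIUl (_ : [set x] :&: g'.1 = set0) ?set0U //; apply/setP=> y; rewrite !inE;
  case: eqP => // ->; rewrite (negbTE x_V').
Qed.

End Step.

Lemma simulates_all M B : simulates M B.
Proof.
have [n] := ubnP #|free g M B|; elim: n M B => // n IHn M B lt_n.
exact: simulates_step IHn _ _ lt_n.
Qed.

Lemma mb_bwin_transfer :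
  (mb_bwin_maker_turn eH b g' set0 set0 -> mb_bwin_maker_turn eH b g set0 set0) /\
  (mb_bwin_breaker_turn eH b g' set0 set0 -> mb_bwin_breaker_turn eH b g set0 set0).
Proof.
split=> win'.
  by apply: (simulates_all Inv0 (sub0set _)); rewrite set0I.
have IH M B (_ : #|free g M B| < #|free g set0 set0|) : simulates M B := @simulates_all M B.
by apply: (simulates_follow_move IH) => //; rewrite set0I.
Qed.

End BreakerSimulation.

Section WaiterLift.
Variables (U T : finType) (eH : rel U) (b : nat) (g g' : vgraph T).
Variables Cx Wx : {set T}.
Implicit Types C W : {set T}.

Hypothesis sub_verts : g'.1 \subset g.1.
Hypothesis claimed_outside : Cx :|: Wx = g.1 :\: g'.1.
Hypothesis lift_win : forall C, C \subset g'.1 ->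
  maker_wins eH g (C :|: Cx) -> maker_wins eH g' C.

Lemma free_lift C W : free g (C :|: Cx) (W :|: Wx) = free g' C W.
Proof.
apply/setP=> y; have : (y \in Cx :|: Wx) = (y \in g.1 :\: g'.1) by rewrite claimed_outside.
have := subsetP sub_verts y; rewrite /free !inE.
by case: (y \in Cx); case: (y \in Wx); case: (y \in g'.1); case: (y \in g.1);
  case: (y \in C); case: (y \in W) => // /(_ isT).
Qed.

Lemma cw_wwin_lift C W : C \subset g'.1 ->
  cw_wwin eH b g' C W -> cw_wwin eH b g (C :|: Cx) (W :|: Wx).
Proof.
move=> sC win'; elim: win' sC => {C W} [C W free0 lost' | C W O sO cardO _ IH] sC.
  by apply: cw_end; rewrite ?free_lift //; apply: contra lost'; exact: lift_win.
apply: (cw_move (O := O)); rewrite ?free_lift // => x x_O.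
have x_V' : x \in g'.1 by have := subsetP sO x x_O; rewrite inE => /andP[].
by rewrite setUA [W :|: Wx :|: _]setUAC; apply: IH; rewrite // subUset sub1set x_V'.
Qed.

End WaiterLift.

Section ClaimBound.
Variables (T : finType) (b : nat) (X : {set T}).
Implicit Types M B D : {set T}.

(* Maker owns at most a (b+1)-th part of the claimed vertices of X, except that
   his last vertex in X may have received fewer than b answers once X is full;
   in the end he owns at most ceil(|X| / (b+1)) vertices of X. *)
Definition claim_bound M B : Prop :=
  b.+1 * #|M :&: X| <= #|X :&: (M :|: B)| \/
  X \subset M :|: B /\ b.+1 * #|M :&: X| <= #|X| + b.

Lemma claim_bound0 B : claim_bound set0 B.
Proof. by left; rewrite set0I cards0 muln0. Qed.

Lemma claim_boundS M B B' : B \subset B' -> claim_bound M B -> claim_bound M B'.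
Proof.
move=> sBB' [le_claimed | [cover le_X]]; [left | right; split=> //].
  by apply: leq_trans le_claimed _; apply/subset_leq_card/setIS/setUS.
exact: subset_trans cover (setUS _ sBB').
Qed.

Lemma claim_bound_outside M B x :
  x \notin X -> claim_bound M B -> claim_bound (x |: M) B.
Proof.
move=> x_X; have eq_xM : (x |: M) :&: X = M :&: X.
  by rewrite setIUl (disjoint_setI0 _) ?set0U ?disjoints1.
rewrite /claim_bound eq_xM; case=> [le_claimed | [cover le_X]]; [left | right; split=> //].
  by apply: leq_trans le_claimed _; apply/subset_leq_card/setIS/setSU/subsetUr.
exact: subset_trans cover (setSU _ (subsetUr _ _)).
Qed.

Lemma claim_bound_le M B : claim_bound M B -> b.+1 * #|M :&: X| <= #|X| + b.
Proof.
case=> [le_claimed | [_ //]].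
by apply: leq_trans le_claimed (leq_trans (subset_leq_card (subsetIl _ _)) (leq_addr _ _)).
Qed.

Lemma claim_bound_claim M B x D :
  x \in X -> x \notin M :|: B -> D \subset X :\: (x |: M :|: B) ->
  b.+1 * #|M :&: X| <= #|X :&: (M :|: B)| ->
  b <= #|D| \/ X \subset x |: M :|: (D :|: B) ->
  claim_bound (x |: M) (D :|: B).
Proof.
move=> x_X x_MB sD le_claimed answered.
have [x_M x_B] : x \notin M /\ x \notin B by apply/norP; rewrite -in_setU.
have x_D : x \notin D by apply: contraNN x_MB => /(subsetP sD); rewrite !inE eqxx.
have card_xM : #|(x |: M) :&: X| = #|M :&: X|.+1.
  by rewrite setIUl (setIidPl _) ?sub1set // cardsU1 inE (negbTE x_M).
have disj : [disjoint X :&: (M :|: B) & x |: D].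
  apply/pred0P=> y; rewrite !inE; apply/negP=> /andP[/andP[_ y_MB]].
  case/orP=> [/eqP y_x | /(subsetP sD)]; first by move: x_MB; rewrite -y_x inE y_MB.
  by rewrite !inE -orbA y_MB orbT.
have sub : X :&: (M :|: B) :|: (x |: D) \subset X :&: (x |: M :|: (D :|: B)).
  rewrite subUset subUset sub1set !inE x_X eqxx /=; apply/andP; split.
    by apply/setIS/setUSS; [exact: subsetUr | exact: subsetUr].
  apply/subsetP=> y y_D; rewrite !inE y_D orbT andbT.
  by have := subsetP sD y y_D; rewrite inE => /andP[].
have count : #|X :&: (M :|: B)| + #|D|.+1 <= #|X :&: (x |: M :|: (D :|: B))|.
  move: (subset_leq_card sub).
  by rewrite cardsU (disjoint_setI0 disj) cards0 subn0 cardsU1 x_D add1n.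
have le_X := leq_trans count (subset_leq_card (subsetIl _ _)).
rewrite /claim_bound card_xM mulnS.
case: answered => [le_bD | cover]; [left | right; split=> //]; lia.
Qed.

Lemma claim_bound_open M B x :
  claim_bound M B -> x \in X -> x \notin M :|: B ->
  b.+1 * #|M :&: X| <= #|X :&: (M :|: B)|.
Proof. by move=> [// | [/subsetP/(_ x) cover _]] /cover ->. Qed.

Lemma claim_bound_respond M B x :
  claim_bound M B -> x \in X -> x \notin M :|: B ->
  exists D : {set T},
    [/\ D \subset X :\: (x |: M :|: B), #|D| <= b & claim_bound (x |: M) (D :|: B)].
Proof.
move=> inv x_X x_MB; have le_claimed := claim_bound_open inv x_X x_MB.
set F := X :\: (x |: M :|: B).
have [le_bF | lt_Fb] := leqP b #|F|.
  have [D sD card_D] := exists_subset_card le_bF.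
  exists D; split; rewrite ?card_D //.
  by apply: claim_bound_claim => //; left; rewrite card_D.
exists F; split=> //; first exact: ltnW.
apply: claim_bound_claim => //; right; apply/subsetP=> y y_X.
by rewrite !inE y_X; case: (y == x); case: (y \in M); case: (y \in B).
Qed.

Lemma claim_bound_offer M B :
  claim_bound M B -> ~~ (X \subset M :|: B) ->
  exists O : {set T}, [/\ O \subset X :\: (M :|: B), 0 < #|O| <= b.+1
              & forall x, x \in O -> claim_bound (x |: M) (B :|: O :\ x)].
Proof.
move=> inv /subsetPn[y y_X y_MB].
set R := X :\: (M :|: B).
have R_gt0 : 0 < #|R| by apply/card_gt0P; exists y; rewrite inE y_MB.
have [O sO card_O] := exists_subset_card (geq_minr b.+1 #|R|).
exists O; split=> //; first by rewrite card_O; lia.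
move=> x x_O; have := subsetP sO x x_O; rewrite inE => /andP[x_MB x_X].
rewrite [B :|: _]setUC; apply: claim_bound_claim (claim_bound_open inv x_X x_MB) _ => //.
  apply/subsetP=> z; rewrite !inE => /andP[z_x /(subsetP sO)].
  by rewrite !inE (negbTE z_x).
have [le_bR | lt_Rb] := leqP b.+1 #|R|.
  by left; move: (cardsD1 x O); rewrite x_O card_O (minn_idPl le_bR) add1n => -[->].
have eq_OR : O = R.
  by apply/eqP; rewrite eqEcard sO card_O (minn_idPr (ltnW lt_Rb)) leqnn.
right; apply/subsetP=> z z_X; rewrite !inE eq_OR !inE z_X.
by case: (z == x); case: (z \in M); case: (z \in B).
Qed.

End ClaimBound.

Lemma cw_wwin_claim_block (U T : finType) (eH : rel U) (b : nat) (g : vgraph T)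
    (X C W : {set T}) :
  X \subset g.1 ->
  (forall C W : {set T}, C :|: W = X -> claim_bound b X C W -> cw_wwin eH b g C W) ->
  C :|: W \subset X -> claim_bound b X C W -> cw_wwin eH b g C W.
Proof.
move=> sX win_full; have [n] := ubnP #|X :\: (C :|: W)|.
elim: n C W => // n IHn C W lt_n sCW inv.
have [cover | open] := boolP (X \subset C :|: W).
  by apply: win_full inv; apply/eqP; rewrite eqEsubset sCW.
have [O [sO cardO inv']] := claim_bound_offer inv open.
apply: (cw_move (O := O)) cardO _; first exact: subset_trans sO (setSD _ sX).
move=> x x_O; have := subsetP sO x x_O; rewrite inE => /andP[x_CW x_X].
have sOX : O \subset X := subset_trans sO (subsetDl _ _).
have shrink : #|X :\: (x |: C :|: (W :|: O :\ x))| < #|X :\: (C :|: W)|.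
  apply/proper_card/properP; split.
    by apply/setDS/setUSS; [exact: subsetUr | exact: subsetUl].
  by exists x; rewrite !inE ?eqxx // x_X andbT; rewrite inE in x_CW.
apply: IHn (inv' x x_O); first exact: leq_trans shrink lt_n.
move: sCW; rewrite !subUset sub1set x_X => /andP[-> ->] /=.
exact: subset_trans (subsetDl _ _) sOX.
Qed.

Definition wins_transfer (U T : finType) (eH : rel U) (b : nat) (g' g : vgraph T) :=
  [/\ mb_bwin_maker_turn eH b g' set0 set0 -> mb_bwin_maker_turn eH b g set0 set0,
      mb_bwin_breaker_turn eH b g' set0 set0 -> mb_bwin_breaker_turn eH b g set0 set0
    & cw_wwin eH b g' set0 set0 -> cw_wwin eH b g set0 set0].

Section BlockTransfer.
Variables (U T : finType) (eH : rel U) (b : nat) (g g' : vgraph T).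
Local Notation X := (g.1 :\: g'.1).

Hypothesis sub_verts : g'.1 \subset g.1.
Hypothesis block_win : forall M : {set T}, b.+1 * #|M :&: X| <= #|X| + b ->
  maker_wins eH g M -> maker_wins eH g' (M :&: g'.1).

Lemma mb_bwin_transfer_block : 0 < b ->
  (mb_bwin_maker_turn eH b g' set0 set0 -> mb_bwin_maker_turn eH b g set0 set0) /\
  (mb_bwin_breaker_turn eH b g' set0 set0 -> mb_bwin_breaker_turn eH b g set0 set0).
Proof.
move=> b_gt0; apply: (mb_bwin_transfer b_gt0 sub_verts (@claim_boundS T b X)).
- by move=> M B x x_V'; apply: claim_bound_outside; rewrite inE x_V'.
- move=> M B x inv; rewrite inE => /andP[x_MB x_g] x_V'.
  have x_X : x \in X by rewrite inE x_V' x_g.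
  have [D [sD le_Db inv']] := claim_bound_respond inv x_X x_MB.
  by exists D; split=> //; apply: subset_trans sD _; exact/setSD/subsetDl.
- by move=> M B /claim_bound_le; exact: block_win.
- exact: claim_bound0.
Qed.

Lemma cw_wwin_transfer_block :
  cw_wwin eH b g' set0 set0 -> cw_wwin eH b g set0 set0.
Proof.
move=> win'; apply: cw_wwin_claim_block (subsetDl _ _) _ _ (claim_bound0 b X set0).
  move=> C W eq_CW /claim_bound_le le_C.
  have C_X : C \subset X by rewrite -eq_CW subsetUl.
  suff lift (C' : {set T}) : C' \subset g'.1 ->
      maker_wins eH g (C' :|: C) -> maker_wins eH g' C'.
    by have := cw_wwin_lift sub_verts eq_CW lift (sub0set _) win'; rewrite !set0U.
  move=> sC'; have V'X : [disjoint g'.1 & X].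
    by apply/pred0P=> y; rewrite !inE; case: (y \in g'.1).
  have eq_X : (C' :|: C) :&: X = C.
    by rewrite setIUl (setIidPl C_X) (disjoint_setI0 (disjointWl sC' V'X)) set0U.
  have eq_V' : (C' :|: C) :&: g'.1 = C'.
    rewrite setIUl (setIidPl sC') (disjoint_setI0 _) ?setU0 //.
    by rewrite disjoint_sym; apply: disjointWr C_X V'X.
  by move/block_win; rewrite eq_X eq_V'; apply; rewrite -(setIidPl C_X).
by rewrite setU0 sub0set.
Qed.

End BlockTransfer.

Lemma wins_transfer_block (U T : finType) (eH : rel U) (b : nat) (g g' : vgraph T) :
  0 < b -> g'.1 \subset g.1 ->
  (forall M : {set T}, b.+1 * #|M :&: (g.1 :\: g'.1)| <= #|g.1 :\: g'.1| + b ->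
     maker_wins eH g M -> maker_wins eH g' (M :&: g'.1)) ->
  wins_transfer eH b g' g.
Proof.
move=> b_gt0 sV block_win.
have [mb_maker mb_breaker] := mb_bwin_transfer_block sV block_win b_gt0.
by split=> //; exact: cw_wwin_transfer_block.
Qed.

Definition del_verts (T : finType) (g : vgraph T) (X : {set T}) : vgraph T :=
  (g.1 :\: X, [set e in g.2 | e \subset g.1 :\: X]).

Definition del_edge (T : finType) (g : vgraph T) (e : {set T}) : vgraph T :=
  (g.1, g.2 :\ e).

Section Deletion.
Variables (U T : finType) (eH : rel U) (b : nat).
Implicit Types (g : vgraph T) (X M A : {set T}) (f : {ffun U -> T}).

Lemma copy_del_verts g X f :
  is_copy eH g f -> [disjoint copy_vertices f & X] -> is_copy eH (del_verts g X) f.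
Proof.
case/and3P=> f_inj /forallP f_in /forallP f_e disj.
have f_del u : f u \in g.1 :\: X by rewrite inE f_in (disjointFr disj) ?imset_f.
apply/and3P; split=> //; first exact/forallP.
apply/forallP=> u; apply/forallP=> v; apply/implyP=> huv.
move/forallP/(_ v)/implyP: (f_e u) => /(_ huv) e_in.
by rewrite inE e_in subUset !sub1set !f_del.
Qed.

Lemma maker_wins_del_verts g X M :
  (forall f, is_copy eH g f -> copy_vertices f \subset M -> [disjoint copy_vertices f & X]) ->
  maker_wins eH g M -> maker_wins eH (del_verts g X) (M :&: (del_verts g X).1).
Proof.
move=> avoid /maker_winsP[f f_copy sfM]; apply/maker_winsP; exists f.
  exact: copy_del_verts (avoid f f_copy sfM).
rewrite subsetI sfM; exact: copy_vertices_sub (copy_del_verts f_copy (avoid f f_copy sfM)).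
Qed.

Lemma maker_wins_del_edge g e M :
  bad_edge eH g e -> maker_wins eH g M ->
  maker_wins eH (del_edge g e) (M :&: (del_edge g e).1).
Proof.
case/andP=> _ no_copy /maker_winsP[f /[dup] f_copy /and3P[f_inj f_in /forallP f_e] sfM].
apply/maker_winsP; exists f; last by rewrite subsetI sfM (copy_vertices_sub f_copy).
apply/and3P; split=> //; apply/forallP=> u; apply/forallP=> v; apply/implyP=> huv.
move/forallP/(_ v)/implyP: (f_e u) => /(_ huv) e_in; rewrite !inE e_in andbT.
apply: contraNneq no_copy => e_uv; apply/existsP; exists f; rewrite f_copy /=.
by apply/existsP; exists u; apply/existsP; exists v; rewrite huv e_uv eqxx.
Qed.

Lemma copy_avoids_bad_vertex g x f :
  bad_vertex eH g x -> is_copy eH g f -> [disjoint copy_vertices f & [set x]].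
Proof.
case/andP=> _ no_copy f_copy; rewrite disjoint_sym disjoints1.
by apply: contra no_copy => x_f; apply/existsP; exists f; rewrite f_copy.
Qed.

Lemma copy_avoids_bad_set g A M f :
  bad_set eH b g A -> #|M :&: A| <= 1 ->
  is_copy eH g f -> copy_vertices f \subset M -> [disjoint copy_vertices f & A].
Proof.
case/and4P=> _ _ _ no_copy le_MA f_copy sfM; rewrite -setI_eq0 -cards_eq0.
have : #|copy_vertices f :&: A| <= 1 by apply: leq_trans le_MA; exact/subset_leq_card/setSI.
rewrite leq_eqVlt ltnS leqn0 => /orP[one | //].
by case/negP: no_copy; apply/existsP; exists f; rewrite f_copy.
Qed.

Lemma copy_avoids_component g x M f :
  (forall u v : U, connect eH u v) -> #|M :&: component g x| < #|U| ->
  is_copy eH g f -> copy_vertices f \subset M -> [disjoint copy_vertices f & component g x].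
Proof.
move=> connH lt_MK f_copy sfM; apply/pred0P=> y /=; apply/negP=> /andP[/imsetP[u _ ->]].
rewrite inE => /andP[_ conn_xu].
have sfK : copy_vertices f \subset M :&: component g x.
  rewrite subsetI sfM; apply/subsetP=> _ /imsetP[v _ ->].
  rewrite inE (subsetP (copy_vertices_sub f_copy)) ?imset_f //=.
  exact: connect_trans conn_xu (copy_connect f_copy (connH u v)).
by move: (subset_leq_card sfK); rewrite (card_copy_vertices f_copy) leqNgt lt_MK.
Qed.

End Deletion.

Inductive peel (U T : finType) (eH : rel U) (b : nat) (g : vgraph T) : vgraph T -> Prop :=
| peel_vertex x : bad_vertex eH g x -> peel eH b g (del_verts g [set x])
| peel_edge e : bad_edge eH g e -> peel eH b g (del_edge g e)
| peel_set A : bad_set eH b g A -> peel eH b g (del_verts g A)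
| peel_component x : in_small_component U b g x -> peel eH b g (del_verts g (component g x)).

Lemma component_sub (T : finType) (g : vgraph T) x : component g x \subset g.1.
Proof. by apply/subsetP=> y; rewrite inE => /andP[]. Qed.

Lemma del_verts_compl (T : finType) (g : vgraph T) (X : {set T}) :
  X \subset g.1 -> g.1 :\: (del_verts g X).1 = X.
Proof. by move=> sX; rewrite setDDr setDv set0U (setIidPr sX). Qed.

Lemma peel_wins_transfer (U T : finType) (eH : rel U) (b : nat) (g g' : vgraph T) :
  0 < b -> (forall u v : U, connect eH u v) -> peel eH b g g' -> wins_transfer eH b g' g.
Proof.
move=> b_gt0 connH; case=> [x bad | e bad | A bad | x small];
  apply: wins_transfer_block; rewrite ?subsetDl //.
- move=> M _; apply: maker_wins_del_verts => f f_copy _.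
  exact: copy_avoids_bad_vertex bad f_copy.
- by move=> M _; apply: maker_wins_del_edge.
- have [sA _ le_A _] := and4P bad.
  move=> M; rewrite del_verts_compl // => le_M.
  apply: maker_wins_del_verts => f; apply: copy_avoids_bad_set bad _.
  by rewrite -ltnS -(ltn_pmul2l (ltn0Sn b)); apply: leq_ltn_trans le_M _; lia.
- case/andP: small => x_g le_K; have sK := component_sub g x.
  have x_K : x \in component g x by rewrite inE x_g connect0.
  have K_gt0 : 0 < #|component g x| by apply/card_gt0P; exists x.
  move=> M; rewrite del_verts_compl // => le_M.
  apply: maker_wins_del_verts => f; apply: copy_avoids_component => //.
  rewrite -(ltn_pmul2l (ltn0Sn b)); nia.
Qed.

Section Core.
Variables (U T : finType) (eH : rel U) (b : nat).
Implicit Types (g S : vgraph T) (X : {set T}).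

Lemma subgraph_refl g : subgraph g g.
Proof. by rewrite /subgraph !subxx. Qed.

Lemma subgraph_trans g1 g2 g3 : subgraph g1 g2 -> subgraph g2 g3 -> subgraph g1 g3.
Proof.
case/andP=> sV sE /andP[sV' sE'].
by rewrite /subgraph (subset_trans sV sV') (subset_trans sE sE').
Qed.

Lemma subgraph_del_verts S g X :
  wf_graph S -> subgraph S g -> [disjoint S.1 & X] -> subgraph S (del_verts g X).
Proof.
move=> /forallP wfS /andP[sV sE] disj.
have sV' : S.1 \subset g.1 :\: X by rewrite subsetD sV disj.
rewrite /subgraph sV' /=; apply/subsetP=> e e_S; rewrite inE (subsetP sE) //=.
by move/implyP/(_ e_S)/andP: (wfS e) => [_ /subset_trans]; apply.
Qed.

Lemma stable_avoids_bad_vertex S g x :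
  stable eH b S -> subgraph S g -> bad_vertex eH g x -> [disjoint S.1 & [set x]].
Proof.
case/and5P=> _ /forallP good_S _ _ _ sSg /andP[_ no_copy].
rewrite disjoint_sym disjoints1; apply: contra no_copy => x_S.
move: (good_S x); rewrite /bad_vertex x_S negbK => /existsP[f /andP[f_copy x_f]].
by apply/existsP; exists f; rewrite (copy_subgraph sSg f_copy).
Qed.

Lemma stable_avoids_bad_edge S g e :
  stable eH b S -> subgraph S g -> bad_edge eH g e -> e \notin S.2.
Proof.
case/and5P=> _ _ /forallP good_S _ _ sSg /andP[_ no_copy]; apply: contra no_copy => e_S.
move: (good_S e); rewrite /bad_edge e_S negbK => /existsP[f /andP[f_copy e_f]].
by apply/existsP; exists f; rewrite (copy_subgraph sSg f_copy).
Qed.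

Lemma stable_avoids_bad_set S g A :
  stable eH b S -> subgraph S g -> bad_set eH b g A -> [disjoint S.1 & A].
Proof.
case/and5P=> _ /forallP good_vS _ /forallP good_sS _ sSg /and4P[_ _ le_A no_copy].
rewrite -setI_eq0; apply: contraT => /set0Pn[y y_SA]; case/negP: no_copy.
suff [f f_copy one] : exists2 f, is_copy eH S f & #|copy_vertices f :&: (S.1 :&: A)| == 1.
  apply/existsP; exists f; rewrite (copy_subgraph sSg f_copy) /=.
  by rewrite setIA (setIidPl (copy_vertices_sub f_copy)) in one.
have [le2 | lt2] := leqP 2 #|S.1 :&: A|.
  move: (good_sS (S.1 :&: A)); rewrite /bad_set subsetIl le2 negbK /=.
  rewrite (leq_trans (subset_leq_card (subsetIr _ _)) le_A) => /existsP[f /andP[]].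
  by exists f.
have y_S : y \in S.1 by move: y_SA; rewrite inE => /andP[].
move: (good_vS y); rewrite /bad_vertex y_S negbK => /existsP[f /andP[f_copy y_f]].
exists f => //; rewrite eqn_leq card_gt0; apply/andP; split.
  by apply: leq_trans (subset_leq_card (subsetIr _ _)) _; rewrite -ltnS.
by apply/set0Pn; exists y; rewrite inE y_f.
Qed.

Lemma stable_avoids_small_component S g x :
  stable eH b S -> subgraph S g -> in_small_component U b g x ->
  [disjoint S.1 & component g x].
Proof.
case/and5P=> _ _ _ _ /forallP good_S /[dup] sSg /andP[sV sE] /andP[_ le_K].
rewrite -setI_eq0; apply: contraT => /set0Pn[y]; rewrite !inE => /andP[y_S /andP[_ conn_xy]].
have : component S y \subset component g x.
  apply/subsetP=> z; rewrite !inE => /andP[z_S conn_yz]; rewrite (subsetP sV) //=.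
  apply: connect_trans conn_xy (connect_sub _ conn_yz) => u v.
  rewrite /gadj => /and3P[u_S v_S e_S]; apply: connect1.
  by rewrite /gadj !(subsetP sV) // (subsetP sE).
move/subset_leq_card/leq_trans/(_ le_K).
by move: (good_S y); rewrite /in_small_component y_S /= => /negbTE ->.
Qed.

Lemma wf_del_verts g X : wf_graph g -> wf_graph (del_verts g X).
Proof.
move/forallP=> wf_g; apply/forallP=> e; apply/implyP; rewrite inE => /andP[e_g sX].
by move/implyP/(_ e_g)/andP: (wf_g e) => [-> _].
Qed.

Lemma wf_del_edge g e : wf_graph g -> wf_graph (del_edge g e).
Proof.
move/forallP=> wf_g; apply/forallP=> e'; apply/implyP; rewrite inE => /andP[_ e'_g].
exact: (implyP (wf_g e')).
Qed.

Lemma del_verts_size g X x :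
  x \in X -> x \in g.1 -> #|(del_verts g X).1| + #|(del_verts g X).2| < #|g.1| + #|g.2|.
Proof.
move=> x_X x_g; rewrite -addSn leq_add //.
  by apply/proper_card/properP; split; [exact: subsetDl | exists x; rewrite ?inE ?x_X].
by apply/subset_leq_card/subsetP=> e; rewrite inE => /andP[].
Qed.

Lemma peel_subgraph g g' : peel eH b g g' -> subgraph g' g.
Proof.
have sub_del X : subgraph (del_verts g X) g.
  by rewrite /subgraph subsetDl; apply/subsetP=> e; rewrite inE => /andP[].
by case=> *; rewrite ?sub_del // /subgraph subxx subsetDl.
Qed.

Lemma peel_wf g g' : wf_graph g -> peel eH b g g' -> wf_graph g'.
Proof. by move=> wf_g; case=> *; rewrite ?wf_del_verts ?wf_del_edge. Qed.

Lemma peel_size g g' : peel eH b g g' -> #|g'.1| + #|g'.2| < #|g.1| + #|g.2|.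
Proof.
case=> [x /andP[x_g _] | e /andP[e_g _] | A /and4P[sA le2 _ _] | x /andP[x_g _]].
- exact: del_verts_size (set11 x) x_g.
- by rewrite ltn_add2l /= (cardsD1 e g.2) e_g.
- have [x x_A] : exists x, x \in A by apply/card_gt0P; exact: leq_trans le2.
  exact: del_verts_size x_A (subsetP sA x x_A).
- by apply: (del_verts_size _ x_g); rewrite inE x_g connect0.
Qed.

Lemma peel_stable S g g' : stable eH b S -> subgraph S g -> peel eH b g g' -> subgraph S g'.
Proof.
move=> /[dup] st_S /and5P[wf_S _ _ _ _] sSg.
case=> [x bad | e bad | A bad | x small]; rewrite ?subgraph_del_verts //.
- exact: stable_avoids_bad_vertex bad.
- have [sV sE] := andP sSg; rewrite /subgraph sV /=; apply/subsetP=> e' e'_S.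
  rewrite inE (subsetP sE) // andbT in_set1.
  by apply: contraNneq (stable_avoids_bad_edge st_S sSg bad) => <-.
- exact: stable_avoids_bad_set bad.
- exact: stable_avoids_small_component small.
Qed.

Lemma unstable_peel g : wf_graph g -> ~~ stable eH b g -> exists g', peel eH b g g'.
Proof.
move=> wf_g unstable_g.
have [x bad | no_bv] := pickP (bad_vertex eH g).
  by exists (del_verts g [set x]); constructor.
have [e bad | no_be] := pickP (bad_edge eH g); first by exists (del_edge g e); constructor.
have [A bad | no_bs] := pickP (bad_set eH b g); first by exists (del_verts g A); constructor.
have [x small | no_sc] := pickP (in_small_component U b g).
  by exists (del_verts g (component g x)); constructor.
case/negP: unstable_g; rewrite /stable wf_g /=.
by apply/and4P; split; apply/forallP=> y; rewrite ?no_bv ?no_be ?no_bs ?no_sc.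
Qed.

Lemma core_max_stable G g : stable eH b g -> subgraph g G ->
  (forall S, subgraph S G -> stable eH b S -> subgraph S g) -> core eH b G = g.
Proof.
move=> st_g sgG max_g; case: g st_g sgG max_g => V E st_g sgG max_g.
set P := fun S => subgraph S G && stable eH b S.
have g_P : P (V, E) by rewrite /P sgG st_g.
rewrite /core; congr pair; apply/eqP; rewrite eqEsubset; apply/andP; split.
- by apply/bigcupsP=> S /andP[sSG st_S]; case/andP: (max_g S sSG st_S).
- exact: (bigcup_sup (V, E) g_P).
- by apply/bigcupsP=> S /andP[sSG st_S]; case/andP: (max_g S sSG st_S).
- exact: (bigcup_sup (V, E) g_P).
Qed.

Lemma core_peel_ind (P : vgraph T -> Prop) G : wf_graph G ->
  (forall g g', peel eH b g g' -> P g' -> P g) -> P (core eH b G) -> P G.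
Proof.
move=> wf_G step P_core.
suff P_sub g : wf_graph g -> subgraph g G ->
    (forall S, subgraph S G -> stable eH b S -> subgraph S g) -> P g.
  by apply: P_sub; rewrite ?subgraph_refl.
have [n] := ubnP (#|g.1| + #|g.2|); elim: n g => // n IHn g lt_n wf_g sgG max_g.
have [st_g | unstable_g] := boolP (stable eH b g).
  by rewrite -(core_max_stable st_g sgG max_g).
have [g' peel_g] := unstable_peel wf_g unstable_g.
apply: (step _ _ peel_g); apply: IHn.
- exact: leq_trans (peel_size peel_g) lt_n.
- exact: peel_wf wf_g peel_g.
- exact: subgraph_trans (peel_subgraph peel_g) sgG.
- by move=> S sSG st_S; apply: peel_stable st_S (max_g S sSG st_S) peel_g.
Qed.

End Core.

Theorem mainTheorem12 (T U : finType) (G : vgraph T) (eH : rel U) (b : nat) :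
  wf_graph G -> symmetric eH -> irreflexive eH ->
  (forall x y : U, connect eH x y) -> 0 < b ->
  (* Maker-Breaker, Maker moves first *)
  (mb_bwin_maker_turn eH b (core eH b G) set0 set0 ->
     mb_bwin_maker_turn eH b G set0 set0) /\
  (* Maker-Breaker, Breaker moves first *)
  (mb_bwin_breaker_turn eH b (core eH b G) set0 set0 ->
     mb_bwin_breaker_turn eH b G set0 set0) /\
  (* Client-Waiter *)
  (cw_wwin eH b (core eH b G) set0 set0 -> cw_wwin eH b G set0 set0).
Proof.
move=> wf_G _ _ connH b_gt0.
have from_core (P : vgraph T -> Prop) :
    (forall g g', wins_transfer eH b g' g -> P g' -> P g) -> P (core eH b G) -> P G.
  move=> P_transfer; apply: core_peel_ind wf_G _ => g g' peel_g.
  exact/P_transfer/(peel_wins_transfer b_gt0 connH peel_g).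
split; [|split].
- by apply: (from_core (fun g => mb_bwin_maker_turn eH b g set0 set0)) => g g' [].
- by apply: (from_core (fun g => mb_bwin_breaker_turn eH b g set0 set0)) => g g' [].
- by apply: (from_core (fun g => cw_wwin eH b g set0 set0)) => g g' [].
Qed.
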